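(* If $(X,\Pi)$ is a finite strictly quasiconvex quasisupermodular aggregative game for which a fESS exists, then imitation is not subject to a money pump.
   Context: An aggregative game $(X,\Pi)$ consists of: a totally ordered action set $X$ (finite here) and a totally ordered set $Z$; a symmetric aggregator $a:X\times X\to Z$ ($a(x,y)=a(y,x)$) that is monotone increasing (if $x''\ge x'$, $y''\ge y'$ and $(x'',y'')\neq(x',y')$ then $a(x'',y'')>a(x',y')$); and $\Pi:X\times Z\to\mathbb{R}$, with underlying symmetric two-player game payoff $\pi(x,y)=\Pi(x,a(x,y))$. Quasisupermodular: for all $z''>z'$ and $x''>x'$, $\Pi(x'',z')-\Pi(x',z')\ge0\Rightarrow\Pi(x'',z'')-\Pi(x',z'')\ge0$ and the same with $>0$ in both places. Strictly quasiconvex: for all $x<x'<x''$ and $z$, $\Pi(x',z)<\max\{\Pi(x,z),\Pi(x'',z)\}$. fESS: $x^*$ with $\Pi(x^*,a(x^*,x))\ge\Pi(x,a(x^*,x))$ for all $x\in X$. Relative payoff: $\Delta(x,y)=\pi(x,y)-\pi(y,x)$. Imitate-the-best: given initial $y_0\in X$ and any opponent sequence $(x_t)_{t\ge0}$, $y_t=x_{t-1}$ if $\Delta(x_{t-1},y_{t-1})>0$ and $y_t=y_{t-1}$ otherwise. Imitation is not subject to a money pump if there is $M\in\mathbb{R}_+$ such that for every $y_0\in X$ and every sequence $(x_t)$, $\limsup_{T\to\infty}\sum_{t=0}^T\Delta(x_t,y_t)\le M$. *)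

From HB Require Import structures.
From mathcomp Require Import all_boot all_order all_algebra.
From mathcomp Require Import all_classical all_reals all_analysis.
Set Implicit Arguments. Unset Strict Implicit. Unset Printing Implicit Defensive.
Import Order.TTheory GRing.Theory Num.Theory.

Section AggGame.
Context {d dz : Order.disp_t} (X : finOrderType d) (Z : orderType dz) (R : realType).
Local Open Scope ring_scope.

Definition agg_symmetric (a : X -> X -> Z) : Prop := forall x y, a x y = a y x.

Definition agg_monotone (a : X -> X -> Z) : Prop :=
  forall x' x'' y' y'' : X, (x' <= x'')%O -> (y' <= y'')%O ->
    (x'', y'') <> (x', y') -> (a x' y' < a x'' y'')%O.

Definition aggregator (a : X -> X -> Z) : Prop := agg_symmetric a /\ agg_monotone a.

Definition pi_of (Pi : X -> Z -> R) (a : X -> X -> Z) (x y : X) : R := Pi x (a x y).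

Definition quasisupermodular (Pi : X -> Z -> R) : Prop :=
  forall (z' z'' : Z) (x' x'' : X), (z' < z'')%O -> (x' < x'')%O ->
    (0 <= Pi x'' z' - Pi x' z' -> 0 <= Pi x'' z'' - Pi x' z'') /\
    (0 < Pi x'' z' - Pi x' z' -> 0 < Pi x'' z'' - Pi x' z'').

Definition strictly_quasiconvex (Pi : X -> Z -> R) : Prop :=
  forall (x x' x'' : X) (z : Z), (x < x')%O -> (x' < x'')%O ->
    Pi x' z < Num.max (Pi x z) (Pi x'' z).

Definition fESS (Pi : X -> Z -> R) (a : X -> X -> Z) (xs : X) : Prop :=
  forall x : X, Pi x (a xs x) <= Pi xs (a xs x).

Definition Delta (Pi : X -> Z -> R) (a : X -> X -> Z) (x y : X) : R :=
  pi_of Pi a x y - pi_of Pi a y x.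

Fixpoint imitate (Pi : X -> Z -> R) (a : X -> X -> Z) (y0 : X) (xs : nat -> X)
    (t : nat) : X :=
  match t with
  | 0 => y0
  | t'.+1 => let y := imitate Pi a y0 xs t' in
             if 0 < Delta Pi a (xs t') y then xs t' else y
  end.

Definition no_money_pump (Pi : X -> Z -> R) (a : X -> X -> Z) : Prop :=
  exists M : R, 0 <= M /\
    forall (y0 : X) (xs : nat -> X),
      (limn_esup (fun T : nat =>
         (\sum_(0 <= t < T.+1) Delta Pi a (xs t) (imitate Pi a y0 xs t))%:E)
       <= M%:E)%E.

End AggGame.

From Pilot Require Import Defs.
From HB Require Import structures.
From mathcomp Require Import all_boot all_order all_algebra.
From mathcomp Require Import all_classical all_reals all_analysis.
From mathcomp Require Import lra.
Import Order.TTheory GRing.Theory Num.Theory.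

(* By symmetry of the aggregator, Delta(x, y) = Pi(x, z) - Pi(y, z) with z = a(x, y),
   so relative payoffs compare two actions at one and the same aggregate.  Among the
   extreme actions n < m of any set S, quasisupermodularity transports the comparison
   of n and m from the aggregate a(n, m) to the aggregate of any interior z, and strict
   quasiconvexity then makes z strictly worse than the winning extreme.  Hence every
   nonempty S has an element beaten by no element of S; peeling such elements off one
   by one ranks X so that "x beats y" strictly raises the rank.  Along an imitation
   path the cumulative relative payoff is then bounded by (max Delta) * (rank gain),
   which is bounded since X is finite. *)

Local Open Scope ring_scope.

Lemma limn_esup_le (R : realType) (u : (\bar R)^nat) (M : \bar R) :
  (forall n, (u n <= M)%E) -> (limn_esup u <= M)%E.
Proof.
move=> uM; rewrite limn_esup_lim (cvg_lim _ (@cvg_esups_inf R _)) //.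
apply: le_trans (ereal_inf_lbound _) _; first by exists 0%N.
by apply: ge_ereal_sup => _ [k _ <-].
Qed.

Section RelativePayoff.
Context {d dz : Order.disp_t} {X : finOrderType d} {Z : orderType dz} {R : realType}.
Context {a : X -> X -> Z} {Pi : X -> Z -> R}.

Local Notation Delta := (Delta Pi a).
Local Notation imitate := (imitate Pi a).

Lemma Delta_xx x : Delta x x = 0.
Proof. exact: subrr. Qed.

Lemma DeltaC x y : Delta y x = - Delta x y.
Proof. by rewrite opprB. Qed.

Lemma imitate_sum_le {r : X -> nat} {B : R} :
  (forall x y, Delta x y <= B) -> (forall x y, 0 < Delta x y -> (r y < r x)%N) ->
  forall y0 xs T, \sum_(0 <= t < T) Delta (xs t) (imitate y0 xs t) <=
                  B * (r (imitate y0 xs T))%:R - B * (r y0)%:R.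
Proof.
move=> DB r_beats y0 xs; have B_ge0 : 0 <= B by have := DB y0 y0; rewrite Delta_xx.
elim=> [|T IH]; first by rewrite big_geq // subrr.
rewrite big_nat_recr //= -/(imitate y0 xs T).
move: IH; set y := imitate y0 xs T => IH.
case: ifP => [beats|]; last by rewrite ltNge => /negbFE; lra.
have rank_gain : B * (r y)%:R + B <= B * (r (xs T))%:R.
  by rewrite -[X in _ + X]mulr1 -mulrDr ler_wpM2l // natr1 ler_nat r_beats.
by have := DB (xs T) y; lra.
Qed.

Lemma no_money_pump_of_rank (r : X -> nat) :
  (forall x y, 0 < Delta x y -> (r y < r x)%N) -> no_money_pump Pi a.
Proof.
move=> r_beats; pose B := \big[Num.max/0]_(p : X * X) Delta p.1 p.2.
have DB x y : Delta x y <= B by exact: (le_bigmax _ _ (x, y)).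
pose K := \max_x r x.
have B_ge0 : 0 <= B by exact: bigmax_ge_id.
exists (B * K%:R); split => [|y0 xs]; first exact: mulr_ge0.
apply: limn_esup_le => T; rewrite lee_fin.
apply: le_trans (imitate_sum_le DB r_beats y0 xs T.+1) _.
have : B * (r (imitate y0 xs T.+1))%:R <= B * K%:R.
  by rewrite ler_wpM2l // ler_nat; exact: leq_bigmax.
have : 0 <= B * (r y0)%:R by exact: mulr_ge0.
lra.
Qed.

Hypotheses (a_sym : agg_symmetric a) (a_mon : agg_monotone a).
Hypotheses (Pi_sqc : strictly_quasiconvex Pi) (Pi_qsm : quasisupermodular Pi).

Lemma DeltaE x y : Delta x y = Pi x (a x y) - Pi y (a x y).
Proof. by rewrite /Delta /Defs.pi_of (a_sym y x). Qed.

Lemma Delta_interior_max {n z m : X} :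
  (n < z)%O -> (z < m)%O -> 0 <= Delta m n -> Delta z m < 0.
Proof.
move=> nz zm; rewrite !DeltaE (a_sym m n) => m_wins.
have agg_up : (a n m < a z m)%O.
  by apply: a_mon; [exact: ltW | exact: lexx | case=> zn; move: nz; rewrite zn ltxx].
have [m_still_wins _] := Pi_qsm _ _ _ _ agg_up (lt_trans nz zm).
have := Pi_sqc _ _ _ (a z m) nz zm.
by rewrite (max_idPr _); [lra | have := m_still_wins m_wins; lra].
Qed.

Lemma Delta_interior_min {n z m : X} :
  (n < z)%O -> (z < m)%O -> Delta m n < 0 -> Delta z n < 0.
Proof.
move=> nz zm; rewrite !DeltaE (a_sym m n) (a_sym z n) => n_wins.
have agg_up : (a n z < a n m)%O.
  by apply: a_mon; [exact: lexx | exact: ltW | case=> zm'; move: zm; rewrite zm' ltxx].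
have [_ m_wins_at_z] := Pi_qsm _ _ _ _ agg_up (lt_trans nz zm).
have n_still_wins : Pi m (a n z) - Pi n (a n z) <= 0.
  by rewrite leNgt; apply/negP => /m_wins_at_z; lra.
have := Pi_sqc _ _ _ (a n z) nz zm.
by rewrite (max_idPl _); lra.
Qed.

Lemma exists_unbeaten {S : {set X}} :
  (0 < #|S|)%N -> exists2 m, m \in S & {in S, forall z, Delta z m <= 0}.
Proof.
case/card_gt0P => x0 Sx0.
have [n nS n_min] := @arg_minP _ X X x0 (mem S) id Sx0.
have [m mS m_max] := @arg_maxP _ X X x0 (mem S) id Sx0.
have interior z : z \in S -> z != n -> z != m -> (n < z)%O /\ (z < m)%O.
  move=> zS zn zm; rewrite !lt_neqAle [n == z]eq_sym zn zm.
  by split; [exact: n_min | exact: m_max].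
have [m_wins|n_wins] := leP 0 (Delta m n).
- exists m => // z zS.
  have [->|zm] := eqVneq z m; first by rewrite Delta_xx.
  have [->|zn] := eqVneq z n; first by rewrite DeltaC oppr_le0.
  by have [nz {}zm] := interior z zS zn zm; exact: ltW (Delta_interior_max nz zm m_wins).
- exists n => // z zS.
  have [->|zn] := eqVneq z n; first by rewrite Delta_xx.
  have [->|zm] := eqVneq z m; first exact: ltW.
  by have [nz {}zm] := interior z zS zn zm; exact: ltW (Delta_interior_min nz zm n_wins).
Qed.

Lemma exists_rank (S : {set X}) :
  exists r : X -> nat, {in S &, forall x y, 0 < Delta x y -> (r y < r x)%N}.
Proof.
have [k] := ubnP #|S|; elim: k S => // k IH S; rewrite ltnS => cardS.
have [S0|S_gt0] := posnP #|S|; first by exists (fun=> 0%N) => x y; rewrite card0_eq.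
have [m mS m_unbeaten] := exists_unbeaten S_gt0.
have [r r_rank] := IH (S :\ m) (leq_trans (proper_card (properD1 mS)) cardS).
exists (fun z => if z == m then (\max_x r x).+1 else r z) => x y xS yS x_beats_y.
have [ym|ym] := eqVneq y m.
  by have := m_unbeaten x xS; rewrite -ym; lra.
have [xm|xm] := eqVneq x m; first by rewrite ltnS leq_bigmax.
by apply: r_rank; rewrite // !inE ?xm ?ym.
Qed.

End RelativePayoff.

Theorem proposition7 (d dz : Order.disp_t) (X : finOrderType d) (Z : orderType dz)
  (R : realType) (a : X -> X -> Z) (Pi : X -> Z -> R) :
  aggregator a ->
  strictly_quasiconvex Pi ->
  quasisupermodular Pi ->
  (exists xs : X, fESS Pi a xs) ->
  no_money_pump Pi a.
Proof.
move=> [a_sym a_mon] Pi_sqc Pi_qsm _.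
have [r r_rank] := exists_rank a_sym a_mon Pi_sqc Pi_qsm [set: X].
apply: (no_money_pump_of_rank r) => x y.
by apply: r_rank; rewrite inE.
Qed.
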